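(* Let $n\ge4$, $p$ a prime with $p\ge\max\{n-2,3\}$, and $1\le j\le n-3$. For $t=(t_1,\dots,t_n)\in\{0,\dots,p-1\}^n$ set $d_t=\sum_it_i$, let $q^0_{jt}=(j+d_t)/p$ if $j+d_t\equiv0\pmod p$ (undefined otherwise), and $q^1_{jt}=(j+d_t-p+2)/p$ if $j+d_t-p+2\equiv0\pmod p$ (undefined otherwise). Then $q^0_{jt}$ and $q^1_{jt}$ are never both defined. Moreover, whenever defined, $q^0_{jt}\in[1,n-1]$ if $(j,p)\neq(1,n-2)$ and $q^0_{jt}\in[1,n-2]$ if $(j,p)=(1,n-2)$; and $q^1_{jt}\in[0,n-2]$ if $(j,p)\ne(n-3,n-2)$ and $q^1_{jt}\in[1,n-2]$ if $(j,p)=(n-3,n-2)$. All integer values in these intervals occur as $t$ varies.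
   Context: Intervals $[a,b]$ denote sets of integers. *)

From mathcomp Require Import all_boot all_order all_algebra.
Set Implicit Arguments. Unset Strict Implicit. Unset Printing Implicit Defensive.
Import Order.TTheory GRing.Theory Num.Theory.

Definition dsum (n p : nat) (t : 'I_n -> 'I_p) : nat := (\sum_(i < n) (t i : nat))%N.

Definition q0 (n p j : nat) (t : 'I_n -> 'I_p) : option int :=
  let a : int := (j%:Z + (dsum t)%:Z)%R in
  if (p%:Z %| a)%Z then Some (a %/ p%:Z)%Z else None.

Definition q1 (n p j : nat) (t : 'I_n -> 'I_p) : option int :=
  let a : int := (j%:Z + (dsum t)%:Z - p%:Z + 2)%R in
  if (p%:Z %| a)%Z then Some (a %/ p%:Z)%Z else None.

From mathcomp Require Import all_boot all_order all_algebra.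
From mathcomp Require Import zify.
Import Order.TTheory GRing.Theory Num.Theory.
Local Open Scope ring_scope.

(* As t ranges over {0,...,p-1}^n, d_t takes exactly the values 0, ..., n(p-1).
   Hence the values of q^0_{jt} are exactly the integers q with
   0 <= qp - j <= n(p-1), and those of q^1_{jt} the integers q with
   0 <= qp - j + p - 2 <= n(p-1); the bounds then follow from 1 <= j <= n-3
   and n-2 <= p.  If both were defined, p would divide the difference p - 2
   of the two numerators, which is impossible for p >= 3. *)

Definition exact_quot (P a : int) : option int :=
  if (P %| a)%Z then Some (a %/ P)%Z else None.

Lemma exact_quotP {P a q : int} : P != 0 ->
  exact_quot P a = Some q <-> a = q * P.
Proof.
move=> P0; rewrite /exact_quot; split.
- by case: ifP => // + [<-]; rewrite dvdz_eq => /eqP.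
- by move=> ->; rewrite dvdz_mull ?dvdzz // mulzK.
Qed.

Lemma sum_greedy_digits (c d m : nat) :
  (\sum_(i < m) minn c (d - i * c))%N = minn d (m * c).
Proof.
elim: m => [|m IHm]; first by rewrite big_ord0; lia.
by rewrite big_ord_recr /= IHm; lia.
Qed.

Section DigitSums.

Variables n p : nat.
Hypothesis p_gt0 : (0 < p)%N.

Lemma dsum_le (t : 'I_n -> 'I_p) : (dsum t <= n * p.-1)%N.
Proof.
rewrite /dsum -[n in (_ <= n * _)%N]card_ord -sum_nat_const.
by apply: leq_sum => i _; have := ltn_ord (t i); lia.
Qed.

Lemma greedy_digit_lt (d i : nat) : (minn p.-1 (d - i * p.-1) < p)%N.
Proof. by rewrite (leq_ltn_trans (geq_minl _ _)) // ltn_predL. Qed.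

Definition greedy_digits (d : nat) : 'I_n -> 'I_p :=
  fun i => Ordinal (greedy_digit_lt d i).

Lemma dsum_greedy_digits (d : nat) : (d <= n * p.-1)%N ->
  dsum (greedy_digits d) = d.
Proof.
move=> le_d; rewrite /dsum /greedy_digits /=.
by rewrite (sum_greedy_digits p.-1 d n); lia.
Qed.

Lemma exact_quot_dsum_image (c q : int) :
  (exists t : 'I_n -> 'I_p, exact_quot p%:Z (c + (dsum t)%:Z) = Some q) <->
  0 <= q * p%:Z - c <= (n * p.-1)%N%:Z.
Proof.
have pZ : p%:Z != 0 by rewrite eqz_nat -lt0n.
split.
- case=> t /(exact_quotP pZ) tE; have := dsum_le t; lia.
- move=> window; pose d := absz (q * p%:Z - c)%R.
  have le_d : (d <= n * p.-1)%N by lia.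
  exists (greedy_digits d); apply/(exact_quotP pZ).
  by rewrite dsum_greedy_digits //; lia.
Qed.

End DigitSums.

Arguments exact_quot_dsum_image {n p}.

Lemma dvdz_shift_excl {P} (a : int) : 2 < P ->
  ~~ (P %| a)%Z || ~~ (P %| (a - P + 2)%R)%Z.
Proof.
move=> P_gt2; rewrite -negb_and; apply/negP => /andP[Pa Pa'].
have P2 : (P %| 2%R)%Z.
  have -> : 2 = a - P + 2 - a + P by lia.
  by rewrite rpredD ?rpredB.
by move: P2; rewrite dvdzE => /dvdn_leq-/(_ isT); lia.
Qed.

Lemma q1E (n p j : nat) (t : 'I_n -> 'I_p) :
  q1 j t = exact_quot p%:Z ((j%:Z - p%:Z + 2) + (dsum t)%:Z).
Proof.
rewrite /q1 /exact_quot /=.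
by have -> : j%:Z + (dsum t)%:Z - p%:Z + 2 = j%:Z - p%:Z + 2 + (dsum t)%:Z by lia.
Qed.

Section QuotientRanges.

Context {n p j : nat}.
Hypotheses (n_ge4 : (4 <= n)%N) (p_ge : (maxn (n - 2) 3 <= p)%N).
Hypotheses (j_ge1 : (1 <= j)%N) (j_le : (j <= n - 3)%N).

Let p_gt0 : (0 < p)%N. Proof. by apply: leq_trans p_ge; rewrite leq_max orbT. Qed.

Lemma q0_q1_excl (t : 'I_n -> 'I_p) : q0 j t = None \/ q1 j t = None.
Proof using p_ge.
have p_gt2 : 2 < p%:Z.
  by rewrite ltz_nat; apply: leq_trans p_ge; rewrite leq_max leqnn orbT.
have := dvdz_shift_excl (j%:Z + (dsum t)%:Z) p_gt2.
by rewrite /q0 /q1 /=; case/orP=> /negbTE ->; [left | right].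
Qed.

(* The top value q = n - 1 needs p >= n - j, which fails only for j = 1, p = n - 2. *)
Lemma q0_window (q : int) :
  (0 <= q * p%:Z - j%:Z <= (n * p.-1)%N%:Z) =
  (1 <= q <= (if (j == 1%N) && (p == (n - 2)%N) then (n - 2)%N%:Z
              else (n - 1)%N%:Z)).
Proof.
by case: ifP => /andP; [case=> /eqP jE /eqP pE | move=> not_edge];
  apply/idP/idP; nia.
Qed.

(* The bottom value q = 0 needs p >= j + 2, which fails only for j = n - 3, p = n - 2. *)
Lemma q1_window (q : int) :
  (0 <= q * p%:Z - (j%:Z - p%:Z + 2) <= (n * p.-1)%N%:Z) =
  ((if (j == (n - 3)%N) && (p == (n - 2)%N) then 1 else 0) <= q
   <= (n - 2)%N%:Z).
Proof.
by case: ifP => /andP; [case=> /eqP jE /eqP pE | move=> not_edge];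
  apply/idP/idP; nia.
Qed.

Lemma q0_image (q : int) :
  (exists t : 'I_n -> 'I_p, q0 j t = Some q) <->
  1 <= q <= (if (j == 1%N) && (p == (n - 2)%N) then (n - 2)%N%:Z
             else (n - 1)%N%:Z).
Proof. by rewrite -q0_window; exact: exact_quot_dsum_image. Qed.

Lemma q1_image (q : int) :
  (exists t : 'I_n -> 'I_p, q1 j t = Some q) <->
  (if (j == (n - 3)%N) && (p == (n - 2)%N) then 1 else 0) <= q <= (n - 2)%N%:Z.
Proof.
rewrite -q1_window; apply: iff_trans (exact_quot_dsum_image p_gt0 _ q).
by split=> -[t tE]; exists t; rewrite q1E in tE *.
Qed.

End QuotientRanges.

Theorem lemma6p4 (n p j : nat) (hn : (4 <= n)%N) (hp : prime p)
  (hpn : (maxn (n - 2) 3 <= p)%N) (hj1 : (1 <= j)%N) (hj2 : (j <= n - 3)%N) :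
  let hi0 : int := if (j == 1%N) && (p == (n - 2)%N) then (n - 2)%N%:Z else (n - 1)%N%:Z in
  let lo1 : int := if (j == (n - 3)%N) && (p == (n - 2)%N) then 1 else 0 in
  let hi1 : int := (n - 2)%N%:Z in
  (forall t : 'I_n -> 'I_p, q0 j t = None \/ q1 j t = None) /\
  (forall (t : 'I_n -> 'I_p) (q : int), q0 j t = Some q -> 1 <= q <= hi0) /\
  (forall (t : 'I_n -> 'I_p) (q : int), q1 j t = Some q -> lo1 <= q <= hi1) /\
  (forall q : int, 1 <= q <= hi0 -> exists t : 'I_n -> 'I_p, q0 j t = Some q) /\
  (forall q : int, lo1 <= q <= hi1 -> exists t : 'I_n -> 'I_p, q1 j t = Some q).
Proof.
move=> hi0 lo1 hi1; split; first exact: (q0_q1_excl hpn).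
split; first by move=> t q tE; apply/(q0_image hn hpn hj1 hj2); exists t.
split; first by move=> t q tE; apply/(q1_image hn hpn hj1 hj2); exists t.
by split=> q; [move/(q0_image hn hpn hj1 hj2) | move/(q1_image hn hpn hj1 hj2)].
Qed.
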